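(* Assume $abcd\neq0$. Let $(\omega_M)_{M\ge1}$ be points of $B_{out}$, let $\theta_M>0$ be defined by $\cosh\theta_M=|x(\omega_M)|$, and suppose $M\theta_M\to\theta_*\in(0,\infty)$ as $M\to\infty$. Then \[\lim_{M\to\infty}\frac{\mathcal{E}_M(\omega_M)}{M}=\frac{1}{\sinh^2\theta_*}\left(\frac{\sinh2\theta_*}{2\theta_*}-1\right).\]
   Context: Setting: $C=\begin{bmatrix} a&b\\ c&d\end{bmatrix}$ a fixed $2\times2$ unitary matrix, $\Delta=\det C$, a fixed square root $\Delta^{1/2}$; for each $M\ge1$, $\Gamma_M=\{0,\dots,M-1\}$ and $E_M$ is the linear map on $\ell^2(\Gamma_M;\mathbb{C}^2)$ with $(E_M\varphi)(x)=P\varphi(x+1)+Q\varphi(x-1)$, $\varphi(-1)=\varphi(M)=0$, $P=\begin{bmatrix} a&b\\0&0\end{bmatrix}$, $Q=\begin{bmatrix}0&0\\c&d\end{bmatrix}$. For $\omega$ on the unit circle let $z=\Delta^{1/2}\omega$ and let $\varphi$ be the unique solution of $(z-E_M)\varphi=\delta_0|R\rangle$, $|R\rangle=(0,1)^\top$; the energy is $\mathcal{E}_M(\omega)=\sum_{n=0}^{M-1}\|\varphi(n)\|^2_{\mathbb{C}^2}$. Let $x(\omega)=\frac{\omega+\omega^{-1}}{2|a|}$ and $B_{out}=\{\omega:|\omega|=1,\ |x(\omega)|>1\}$. *)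

From Stdlib Require Import Reals ZArith.
From Coquelicot Require Import Coquelicot.
Open Scope C_scope.

Definition vec2 := (Complex.C * Complex.C)%type.
Definition vzero : vec2 := (RtoC 0, RtoC 0).
Definition vadd (u v : vec2) : vec2 := (fst u + fst v, snd u + snd v).
Definition vscal (s : Complex.C) (u : vec2) : vec2 := (s * fst u, s * snd u).
Definition vsub (u v : vec2) : vec2 := (fst u - fst v, snd u - snd v).
Definition vnormsq (u : vec2) : R := (Cmod (fst u) ^ 2 + Cmod (snd u) ^ 2)%R.

(* C = [[a, b], [c, d]] is unitary: C^* C = I (written out entrywise) *)
Definition unitary2 (a b c d : Complex.C) : Prop :=
  (Cmod a ^ 2 + Cmod c ^ 2 = 1)%R /\ (Cmod b ^ 2 + Cmod d ^ 2 = 1)%R /\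
  Cconj a * b + Cconj c * d = RtoC 0.

(* P = [[a, b], [0, 0]],  Q = [[0, 0], [c, d]] *)
Definition Pmul (a b : Complex.C) (u : vec2) : vec2 := (a * fst u + b * snd u, RtoC 0).
Definition Qmul (c d : Complex.C) (u : vec2) : vec2 := (RtoC 0, c * fst u + d * snd u).

(* extension by zero of phi restricted to Gamma_M = {0,...,M-1}:
   phi(-1) = phi(M) = 0 *)
Definition ext (M : nat) (phi : nat -> vec2) (k : Z) : vec2 :=
  if (Z.leb 0 k && Z.ltb k (Z.of_nat M))%bool then phi (Z.to_nat k) else vzero.

Definition EM (a b c d : Complex.C) (M : nat) (phi : nat -> vec2) (x : nat) : vec2 :=
  vadd (Pmul a b (ext M phi (Z.of_nat x + 1)%Z)) (Qmul c d (ext M phi (Z.of_nat x - 1)%Z)).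

(* delta_0 |R>, |R> = (0,1) *)
Definition src (x : nat) : vec2 :=
  if Nat.eqb x 0 then (RtoC 0, RtoC 1) else vzero.

Definition solves (a b c d z : Complex.C) (M : nat) (phi : nat -> vec2) : Prop :=
  forall x : nat, (x < M)%nat -> vsub (vscal z (phi x)) (EM a b c d M phi x) = src x.

Fixpoint energy (M : nat) (phi : nat -> vec2) : R :=
  match M with
  | O => 0%R
  | S m => (energy m phi + vnormsq (phi m))%R
  end.

Definition xfun (a omega : Complex.C) : Complex.C :=
  (omega + / omega) / RtoC (2 * Cmod a).

Definition in_Bout (a omega : Complex.C) : Prop :=
  Cmod omega = 1%R /\ (Cmod (xfun a omega) > 1)%R.

(* Write [s] for the square root of [det C], [A = |a|] and [z = s w].  Unitarity
   and [abcd <> 0] give [0 < A < 1], [|s| = 1], [|b|^2 = 1 - A^2],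
   [d = s^2 A^2 / a] and [c = s^2 (A^2 - 1) / b].  Reading the equation
   [(z - E_M) phi = delta_0 |R>] from the right end [phi(M) = 0] to the left
   end, every [phi(M-1-k)] is [phi(M-1)] times an explicit vector [Wvec k]
   whose entries are Chebyshev numbers [cheb C k], [cheb C (k+1)] at
   [C = |x(w)|] times a unimodular phase.  Hence
     E_M = (sum_(k<M) weight k) / tail (M-1),
   where [weight k = |Wvec k|^2] and the boundary condition at site 0 fixes
   [|phi(M-1)|^2 = 1 / tail (M-1)].  With [C = cosh theta], [q = exp theta],
   both [weight] and [tail] are combinations of powers of [q], so [E_M / M] is
   an explicit rational expression in [q], [q^M] and the geometric averages
   [(1/M) sum_(k<M) q^(+-2k)]; as [M theta_M -> theta*] these converge to
   [1], [exp theta*] and Riemann integrals of [exp], which yields the limit. *)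

From Stdlib Require Import Reals Lra Lia ZArith.
From Coquelicot Require Import Coquelicot.
Open Scope R_scope.

Fixpoint rsum (f : nat -> R) (M : nat) : R :=
  match M with O => 0 | S m => rsum f m + f m end.

Lemma rsum_ext (f g : nat -> R) (M : nat) :
  (forall k, (k < M)%nat -> f k = g k) -> rsum f M = rsum g M.
Proof.
induction M as [|M IH]; intro Hfg; simpl; [reflexivity|].
rewrite IH by (intros; apply Hfg; lia). rewrite Hfg by lia. reflexivity.
Qed.

Lemma rsum_scal (c : R) (f : nat -> R) (M : nat) :
  rsum (fun k => c * f k) M = c * rsum f M.
Proof. induction M as [|M IH]; simpl; [ring|]. rewrite IH. ring. Qed.

Lemma rsum_shift (f : nat -> R) (M : nat) :
  rsum f (S M) = f 0%nat + rsum (fun k => f (S k)) M.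
Proof.
induction M as [|M IH]; [simpl; ring|].
change (rsum f (S (S M))) with (rsum f (S M) + f (S M)). rewrite IH. simpl. ring.
Qed.

Lemma rsum_rev (f : nat -> R) (M : nat) :
  rsum (fun k => f (M - 1 - k)%nat) M = rsum f M.
Proof.
induction M as [|M IH]; [reflexivity|].
rewrite rsum_shift, (rsum_ext _ (fun k => f (M - 1 - k)%nat)) by (intros; f_equal; lia).
rewrite IH. replace (S M - 1 - 0)%nat with M by lia. simpl. ring.
Qed.

Lemma rsum_two_geom (al be ga x y : R) (M : nat) :
  rsum (fun k => al * x ^ k + be * y ^ k + ga) M
  = al * rsum (fun k => x ^ k) M + be * rsum (fun k => y ^ k) M + ga * INR M.
Proof. induction M as [|M IH]; [simpl; ring|]. rewrite S_INR. cbn [rsum]. rewrite IH. ring. Qed.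

Lemma rsum_geom (r : R) (M : nat) :
  r <> 1 -> rsum (fun k => r ^ k) M = (r ^ M - 1) / (r - 1).
Proof.
intro Hr. assert (r - 1 <> 0) by lra.
induction M as [|M IH]; simpl; [field; auto|]. rewrite IH. field. auto.
Qed.

(* The Chebyshev polynomials of the second kind, shifted: [cheb C k = U_(k-1)(C)]. *)
Fixpoint cheb (C : R) (k : nat) : R :=
  match k with
  | O => 0
  | S O => 1
  | S ((S m) as k') => 2 * C * cheb C k' - cheb C m
  end.

(* At [C = cosh theta], i.e. [C = (q + 1/q)/2] with [q = exp theta],
   [cheb C k = sinh (k theta) / sinh theta]. *)
Lemma cheb_exp (q : R) (k : nat) :
  q <> 0 -> cheb ((q + / q) / 2) k * (q - / q) = q ^ k - / q ^ k.
Proof.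
intro Hq. set (C := (q + / q) / 2).
enough (H : forall k, cheb C k * (q - / q) = q ^ k - / q ^ k /\
                      cheb C (S k) * (q - / q) = q ^ S k - / q ^ S k) by apply H.
intro j. induction j as [|j [IH1 IH2]]; [simpl; split; field; exact Hq|].
split; [exact IH2|].
assert (q ^ j <> 0) by (apply pow_nonzero, Hq).
transitivity ((q + / q) * (cheb C (S j) * (q - / q)) - cheb C j * (q - / q)).
- change (cheb C (S (S j))) with (2 * C * cheb C (S j) - cheb C j). unfold C. field. exact Hq.
- rewrite IH1, IH2. simpl. field. auto.
Qed.

(* The squared modulus of the second, resp. of the whole, profile vector at
   distance [k] from the right end (see [Wvec]), for [A = |a|] and [C = |x(w)|]. *)
Definition tail (A C : R) (k : nat) : R :=
  cheb C (S k) ^ 2 - 2 * A ^ 2 * C * cheb C k * cheb C (S k) + A ^ 2 * cheb C k ^ 2.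

Definition weight (A C : R) (k : nat) : R := (1 - A ^ 2) * cheb C k ^ 2 + tail A C k.

(* With [C = (q + 1/q)/2] the weights are combinations of [q^(2k)], [q^(-2k)]
   and [1] with the following coefficients, and [tail (n-1)] is a rational
   function [tailF] of [q] and [y = q^n]. *)
Definition wplus (A q : R) : R := 1 + q * q - A ^ 2 * (q + / q) * q.
Definition wminus (A q : R) : R := 1 + / q * / q - A ^ 2 * (q + / q) * / q.
Definition wconst (A q : R) : R := A ^ 2 * (q + / q) * (q + / q) - 4.

Definition tailF (A q y : R) : R :=
  (y - / y) * (y - / y) - A ^ 2 * (q + / q) * ((y * / q - q * / y) * (y - / y))
  + A ^ 2 * ((y * / q - q * / y) * (y * / q - q * / y)).

Lemma weight_exp (A q : R) (k : nat) : q <> 0 ->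
  weight A ((q + / q) / 2) k * (q - / q) ^ 2
  = wplus A q * (q * q) ^ k + wminus A q * (/ q * / q) ^ k + wconst A q.
Proof.
intro Hq. set (C := (q + / q) / 2).
transitivity ((cheb C k * (q - / q)) ^ 2 + (cheb C (S k) * (q - / q)) ^ 2
              - A ^ 2 * (q + / q) * ((cheb C k * (q - / q)) * (cheb C (S k) * (q - / q)))).
{ unfold weight, tail, C. field. auto. }
unfold C. rewrite !cheb_exp, Rpow_mult_distr, Rpow_mult_distr, pow_inv by auto.
assert (q ^ k <> 0) by (apply pow_nonzero; auto).
unfold wplus, wminus, wconst. simpl pow. field. auto.
Qed.

Lemma tail_exp (A q : R) (n : nat) : q <> 0 -> (1 <= n)%nat ->
  tail A ((q + / q) / 2) (n - 1) * (q - / q) ^ 2 = tailF A q (q ^ n).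
Proof.
intros Hq Hn. destruct n as [|m]; [lia|]. replace (S m - 1)%nat with m by lia.
set (C := (q + / q) / 2).
transitivity ((cheb C (S m) * (q - / q)) ^ 2
              - A ^ 2 * (q + / q) * ((cheb C m * (q - / q)) * (cheb C (S m) * (q - / q)))
              + A ^ 2 * (cheb C m * (q - / q)) ^ 2).
{ unfold tail, C. field. auto. }
unfold C. rewrite !cheb_exp by auto.
assert (q ^ m <> 0) by (apply pow_nonzero; auto).
unfold tailF. simpl pow. field. auto.
Qed.

Lemma rsum_weight_exp (A q : R) (n : nat) : q <> 0 ->
  rsum (weight A ((q + / q) / 2)) n * (q - / q) ^ 2
  = wplus A q * rsum (fun k => (q * q) ^ k) n + wminus A q * rsum (fun k => (/ q * / q) ^ k) n
    + wconst A q * INR n.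
Proof.
intro Hq. rewrite <- rsum_two_geom, Rmult_comm, <- rsum_scal.
apply rsum_ext. intros k _. rewrite Rmult_comm. apply weight_exp. exact Hq.
Qed.

Lemma sub_inv_neq0 (q : R) : 1 < q -> q - / q <> 0.
Proof.
intros Hq E. assert (q * q = 1); [|nra].
replace (q * q) with (q * (q - / q) + 1) by (field; lra). rewrite E. ring.
Qed.

Lemma ratio_exp (A q : R) (n : nat) : 1 < q -> (1 <= n)%nat ->
  rsum (weight A ((q + / q) / 2)) n / tail A ((q + / q) / 2) (n - 1) / INR n
  = (wplus A q * (rsum (fun k => (q * q) ^ k) n / INR n)
     + wminus A q * (rsum (fun k => (/ q * / q) ^ k) n / INR n) + wconst A q)
    / tailF A q (q ^ n).
Proof.
intros Hq Hn.
assert (HD : (q - / q) ^ 2 <> 0) by (apply pow_nonzero, sub_inv_neq0, Hq).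
assert (Hn0 : INR n <> 0) by (apply not_0_INR; lia).
rewrite <- tail_exp by (lra || exact Hn).
set (S := rsum (weight A ((q + / q) / 2)) n).
set (T := tail A ((q + / q) / 2) (n - 1)).
replace (wplus A q * _ + wminus A q * _ + wconst A q) with (S * (q - / q) ^ 2 / INR n)
  by (unfold S; rewrite rsum_weight_exp by lra; field; exact Hn0).
unfold Rdiv. rewrite Rinv_mult.
transitivity (S * / T * / INR n * ((q - / q) ^ 2 * / (q - / q) ^ 2));
  [rewrite Rinv_r, Rmult_1_r by exact HD; reflexivity | ring].
Qed.

Lemma is_lim_seq_inv_real (u : nat -> R) (l : R) :
  is_lim_seq u l -> l <> 0 -> is_lim_seq (fun n => / u n) (/ l).
Proof. intros Hu Hl. apply (is_lim_seq_inv u l Hu). intro E. injection E. exact Hl. Qed.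

Lemma lim_inv_INR : is_lim_seq (fun n => / INR n) 0.
Proof. apply (is_lim_seq_inv INR p_infty is_lim_seq_INR). discriminate. Qed.

Lemma lim_scaled_zero (h : nat -> R) (t : R) :
  is_lim_seq (fun n => INR n * h n) t -> is_lim_seq h 0.
Proof.
intro H.
apply is_lim_seq_ext_loc with (fun n => (INR n * h n) * / INR n).
- exists 1%nat. intros n Hn. field. apply not_0_INR. lia.
- replace 0 with (t * 0) by ring. apply is_lim_seq_mult'; [exact H | apply lim_inv_INR].
Qed.

Lemma cont_exp (x : R) : continuity_pt exp x.
Proof. apply derivable_continuous_pt, derivable_pt_exp. Qed.

Lemma lim_expm1 (y : nat -> R) :
  is_lim_seq y 0 -> (forall n, (1 <= n)%nat -> y n <> 0) ->
  is_lim_seq (fun n => (exp (y n) - 1) / y n) 1.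
Proof.
intros Hy Hnz. apply is_lim_seq_spec. intro eps.
destruct (derivable_pt_lim_exp_0 eps (cond_pos eps)) as [del Hdel].
apply is_lim_seq_spec in Hy. destruct (Hy del) as [N HN].
exists (S N). intros n Hn.
specialize (HN n ltac:(lia)). rewrite Rminus_0_r in HN.
specialize (Hdel (y n) (Hnz n ltac:(lia)) HN).
rewrite Rplus_0_l, exp_0 in Hdel. exact Hdel.
Qed.

Lemma exp_pow_INR (n : nat) (y : R) : exp y ^ n = exp (INR n * y).
Proof.
induction n as [|n IH]; [simpl; rewrite Rmult_0_l, exp_0; reflexivity|].
rewrite S_INR, <- tech_pow_Rmult, IH, <- exp_plus. f_equal. ring.
Qed.

Lemma lim_geom_average (h : nat -> R) (tau : R) :
  tau <> 0 -> (forall n, (1 <= n)%nat -> h n <> 0) ->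
  is_lim_seq (fun n => INR n * h n) tau ->
  is_lim_seq (fun n => rsum (fun k => exp (h n) ^ k) n / INR n) ((exp tau - 1) / tau).
Proof.
intros Htau Hnz Hlim.
assert (Hexp1 : forall x, x <> 0 -> exp x - 1 <> 0).
{ intros x Hx E. apply Hx, exp_inv. rewrite exp_0. lra. }
apply is_lim_seq_ext_loc with
  (fun n => (exp (INR n * h n) - 1) / ((INR n * h n) * ((exp (h n) - 1) / h n))).
- exists 1%nat. intros n Hn.
  assert (INR n <> 0) by (apply not_0_INR; lia).
  specialize (Hnz n Hn). specialize (Hexp1 _ Hnz).
  rewrite rsum_geom, exp_pow_INR by lra. field. auto.
- replace ((exp tau - 1) / tau) with ((exp tau - 1) / (tau * 1)) by (field; auto).
  apply is_lim_seq_div'; [| | lra].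
  + apply is_lim_seq_minus'; [| apply is_lim_seq_const].
    apply (is_lim_seq_continuous exp); [apply cont_exp | exact Hlim].
  + apply is_lim_seq_mult'; [exact Hlim|].
    apply lim_expm1; [eapply lim_scaled_zero; eauto | exact Hnz].
Qed.

Lemma lim_geom_average_scaled (th : nat -> R) (t c : R) :
  0 < t -> c <> 0 -> (forall n, (1 <= n)%nat -> 0 < th n) ->
  is_lim_seq (fun n => INR n * th n) t ->
  is_lim_seq (fun n => rsum (fun k => exp (c * th n) ^ k) n / INR n)
    ((exp (c * t) - 1) / (c * t)).
Proof.
intros Ht Hc Hpos Hlim. apply lim_geom_average.
- apply Rmult_integral_contrapositive. split; lra.
- intros n Hn. apply Rmult_integral_contrapositive. split; [exact Hc | apply Rgt_not_eq, Hpos, Hn].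
- apply is_lim_seq_ext with (fun n => c * (INR n * th n)); [intro n; ring|].
  apply (is_lim_seq_scal_l _ c t Hlim).
Qed.

Ltac lim_arith :=
  repeat first [ assumption | apply is_lim_seq_const | apply is_lim_seq_minus'
               | apply is_lim_seq_plus' | apply is_lim_seq_mult' ].

Lemma limit_value (A t : R) : A ^ 2 < 1 -> 0 < t ->
  (wplus A 1 * ((exp (2 * t) - 1) / (2 * t)) + wminus A 1 * ((exp (-2 * t) - 1) / (-2 * t))
   + wconst A 1) / tailF A 1 (exp t)
  = / (sinh t ^ 2) * (sinh (2 * t) / (2 * t) - 1).
Proof.
intros HA Ht.
assert (Hy : 1 < exp t) by (rewrite <- exp_0; apply exp_increasing; exact Ht).
unfold sinh. replace (-2 * t) with (- t + - t) by ring. replace (- (2 * t)) with (- t + - t) by ring.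
replace (2 * t) with (t + t) at 1 2 3 by ring.
rewrite !exp_plus, !exp_Ropp.
unfold wplus, wminus, wconst, tailF. set (y := exp t) in *.
assert (y * y - 1 <> 0) by (intro E; nra).
field. repeat split; try lra.
intro E. assert (0 < (1 - A ^ 2) * ((y * y - 1) * (y * y - 1))).
{ apply Rmult_lt_0_compat; [lra|]. apply Rmult_lt_0_compat; nra. }
lra.
Qed.

Lemma energy_ratio_limit (A t : R) (th : nat -> R) :
  A ^ 2 < 1 -> 0 < t -> (forall n, (1 <= n)%nat -> 0 < th n) ->
  is_lim_seq (fun n => INR n * th n) t ->
  is_lim_seq (fun n => rsum (weight A (cosh (th n))) n / tail A (cosh (th n)) (n - 1) / INR n)
    (/ (sinh t ^ 2) * (sinh (2 * t) / (2 * t) - 1)).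
Proof.
intros HA Ht Hpos Hlim.
set (q n := exp (th n)).
set (G1 n := rsum (fun k => (q n * q n) ^ k) n / INR n).
set (G2 n := rsum (fun k => (/ q n * / q n) ^ k) n / INR n).
apply is_lim_seq_ext_loc with
  (fun n => (wplus A (q n) * G1 n + wminus A (q n) * G2 n + wconst A (q n))
            / tailF A (q n) (q n ^ n)).
{ exists 1%nat. intros n Hn.
  replace (cosh (th n)) with ((q n + / q n) / 2) by (unfold cosh, q; rewrite exp_Ropp; reflexivity).
  rewrite ratio_exp by (exact Hn || (unfold q; rewrite <- exp_0; apply exp_increasing, Hpos, Hn)).
  reflexivity. }
assert (Hq : is_lim_seq q 1).
{ rewrite <- exp_0. apply (is_lim_seq_continuous exp); [apply cont_exp|].
  eapply lim_scaled_zero; eauto. }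
assert (Hqi : is_lim_seq (fun n => / q n) (/ 1)) by (apply is_lim_seq_inv_real; [exact Hq | lra]).
assert (Hy : is_lim_seq (fun n => q n ^ n) (exp t)).
{ apply is_lim_seq_ext with (fun n => exp (INR n * th n)).
  - intro n. unfold q. rewrite exp_pow_INR. reflexivity.
  - apply (is_lim_seq_continuous exp); [apply cont_exp | exact Hlim]. }
assert (Hyi : is_lim_seq (fun n => / q n ^ n) (/ exp t)).
{ apply is_lim_seq_inv_real; [exact Hy | apply Rgt_not_eq, exp_pos]. }
assert (HG1 : is_lim_seq G1 ((exp (2 * t) - 1) / (2 * t))).
{ apply is_lim_seq_ext with (fun n => rsum (fun k => exp (2 * th n) ^ k) n / INR n).
  - intro n. unfold G1, q. replace (2 * th n) with (th n + th n) by ring.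
    rewrite exp_plus. reflexivity.
  - apply lim_geom_average_scaled; auto; lra. }
assert (HG2 : is_lim_seq G2 ((exp (-2 * t) - 1) / (-2 * t))).
{ apply is_lim_seq_ext with (fun n => rsum (fun k => exp (-2 * th n) ^ k) n / INR n).
  - intro n. unfold G2, q. replace (-2 * th n) with (- th n + - th n) by ring.
    rewrite exp_plus, exp_Ropp. reflexivity.
  - apply lim_geom_average_scaled; auto; lra. }
rewrite <- (limit_value A t HA Ht).
apply is_lim_seq_div'.
- unfold wplus, wminus, wconst. lim_arith.
- unfold tailF. lim_arith.
- assert (Hy1 : 1 < exp t) by (rewrite <- exp_0; apply exp_increasing; exact Ht).
  replace (tailF A 1 (exp t)) with ((1 - A ^ 2) * (exp t - / exp t) ^ 2)
    by (unfold tailF; field; lra).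
  apply Rmult_integral_contrapositive. split; [lra|].
  apply pow_nonzero, sub_inv_neq0, Hy1.
Qed.

Open Scope C_scope.

Lemma ext_nat (M : nat) (phi : nat -> vec2) (n : nat) :
  ext M phi (Z.of_nat n) = if (n <? M)%nat then phi n else vzero.
Proof.
unfold ext. replace (0 <=? Z.of_nat n)%Z with true by (symmetry; apply Z.leb_le; lia).
destruct (Nat.ltb_spec n M) as [Hlt|Hge].
- replace (Z.of_nat n <? Z.of_nat M)%Z with true by (symmetry; apply Z.ltb_lt; lia).
  rewrite Nat2Z.id. reflexivity.
- replace (Z.of_nat n <? Z.of_nat M)%Z with false by (symmetry; apply Z.ltb_ge; lia).
  reflexivity.
Qed.

(* One step of the recursion [(z - E_M) phi = delta_0 |R>] read from right to left:
   [phi x] is determined by [phi (x+1)]. *)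
Definition back (a b c d z : Complex.C) (u : vec2) : vec2 :=
  let x := (a * fst u + b * snd u) / z in (x, (z * snd u - c * x) / d).

Lemma back_scal (a b c d z r : Complex.C) (u : vec2) :
  z <> 0 -> d <> 0 -> back a b c d z (vscal r u) = vscal r (back a b c d z u).
Proof.
intros Hz Hd. unfold back, vscal. cbn [fst snd]. f_equal; field; auto.
Qed.

Lemma Csub_eq_0 (x y : Complex.C) : x - y = 0 -> x = y.
Proof. intro H. transitivity ((x - y) + y); [ring|]. rewrite H. ring. Qed.

Section Solution.
Variables (a b c d z : Complex.C) (M : nat) (phi : nat -> vec2).
Hypotheses (Hsol : solves a b c d z M phi) (Hz : z <> 0) (Hd : d <> 0).

Lemma solves_back (x : nat) : (S x < M)%nat -> phi x = back a b c d z (phi (S x)).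
Proof.
intro Hx.
assert (Hfst := Hsol x ltac:(lia)). assert (Hsnd := Hsol (S x) Hx).
apply (f_equal fst) in Hfst. apply (f_equal snd) in Hsnd.
unfold EM in Hfst, Hsnd.
replace (Z.of_nat x + 1)%Z with (Z.of_nat (S x)) in Hfst by lia.
replace (Z.of_nat (S x) - 1)%Z with (Z.of_nat x) in Hsnd by lia.
rewrite ext_nat in Hfst, Hsnd.
assert (Hsrc : fst (src x) = 0) by (unfold src; destruct (x =? 0)%nat; reflexivity).
rewrite Hsrc in Hfst.
replace (S x <? M)%nat with true in Hfst by (symmetry; apply Nat.ltb_lt; lia).
replace (x <? M)%nat with true in Hsnd by (symmetry; apply Nat.ltb_lt; lia).
unfold src, vsub, vscal, vadd, Pmul, Qmul, vzero in Hfst, Hsnd. cbn [fst snd Nat.eqb] in Hfst, Hsnd.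
destruct (phi x) as [u v], (phi (S x)) as [u' v']. cbn [fst snd] in Hfst, Hsnd.
apply Csub_eq_0 in Hfst, Hsnd.
assert (Hu : u = (a * u' + b * v') / z).
{ transitivity ((z * u) / z); [field; exact Hz|]. rewrite Hfst, Cplus_0_r. reflexivity. }
unfold back. cbn [fst snd]. rewrite <- Hu. f_equal.
rewrite Hsnd. field. exact Hd.
Qed.

(* At the right end [phi M = 0] forces the first component of [phi (M-1)] to vanish. *)
Lemma solves_right_end :
  (1 <= M)%nat -> phi (M - 1)%nat = vscal (snd (phi (M - 1)%nat)) (RtoC 0, RtoC 1).
Proof.
intro HM.
assert (H := Hsol (M - 1)%nat ltac:(lia)). apply (f_equal fst) in H. unfold EM in H.
replace (Z.of_nat (M - 1) + 1)%Z with (Z.of_nat M) in H by lia.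
rewrite ext_nat, Nat.ltb_irrefl in H.
assert (Hsrc : fst (src (M - 1)) = 0) by (unfold src; destruct (M - 1 =? 0)%nat; reflexivity).
rewrite Hsrc in H.
unfold vsub, vscal, vadd, Pmul, Qmul, vzero in H. cbn [fst snd] in H.
destruct (phi (M - 1)%nat) as [u v]. cbn [fst snd] in H |- *. unfold vscal. cbn [fst snd].
f_equal; [| ring].
transitivity ((z * u - (a * 0 + b * 0 + 0)) / z); [field; exact Hz|]. rewrite H. field. exact Hz.
Qed.

(* At the left end the source term normalises the solution. *)
Lemma solves_left_end : (1 <= M)%nat -> z * snd (phi 0%nat) = 1.
Proof.
intro HM. assert (H := Hsol 0%nat ltac:(lia)). apply (f_equal snd) in H.
unfold EM, src, vsub, vscal, vadd, Pmul, Qmul in H. cbn [fst snd Nat.eqb] in H.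
rewrite <- H. unfold ext, vzero. cbn. ring.
Qed.

End Solution.

Lemma Cmod2_comp (z : Complex.C) : (Cmod z ^ 2 = fst z ^ 2 + snd z ^ 2)%R.
Proof. unfold Cmod. rewrite pow2_sqrt; [reflexivity | nra]. Qed.

(* A 2x2 matrix with orthonormal columns has a determinant of modulus one, by
   the Lagrange identity [|det|^2 = |col1|^2 |col2|^2 - |<col1, col2>|^2]. *)
Lemma unitary_det_modulus (a b c d : Complex.C) :
  unitary2 a b c d -> Cmod (a * d - b * c) = 1%R.
Proof.
intros [Hac [Hbd Horth]].
rewrite !Cmod2_comp in Hac, Hbd.
assert (Hre := f_equal fst Horth). assert (Him := f_equal snd Horth).
assert (Hdet : (Cmod (a * d - b * c) ^ 2 = 1)%R).
{ rewrite Cmod2_comp.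
  destruct a as [a1 a2], b as [b1 b2], c as [c1 c2], d as [d1 d2].
  cbn in Hac, Hbd, Hre, Him |- *. nra. }
pose proof (Cmod_ge_0 (a * d - b * c)). nra.
Qed.

Lemma unitary_det_conj (a b c d : Complex.C) :
  unitary2 a b c d -> d = (a * d - b * c) * Cconj a.
Proof.
intros [Hac [_ Horth]].
assert (H1 : a * Cconj a + c * Cconj c = 1).
{ rewrite <- !Cmod2_conj, <- RtoC_plus, Hac. reflexivity. }
transitivity (d * (a * Cconj a + c * Cconj c) - c * (Cconj a * b + Cconj c * d)).
- rewrite H1, Horth. ring.
- ring.
Qed.

Lemma unitary_normal_form (a b c d s : Complex.C) :
  unitary2 a b c d -> a * b * c * d <> 0 -> s * s = a * d - b * c ->
  let A := Cmod a in
  (0 < A)%R /\ (A ^ 2 < 1)%R /\ Cmod s = 1%R /\ (Cmod b ^ 2 = 1 - A ^ 2)%R /\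
  d = s * s * (RtoC A * RtoC A) / a /\ c = s * s * (RtoC A * RtoC A - 1) / b.
Proof.
intros Hu Hnz Hs A.
assert (Ha : a <> 0) by (intro E; apply Hnz; rewrite E; ring).
assert (Hb : b <> 0) by (intro E; apply Hnz; rewrite E; ring).
assert (Hc : c <> 0) by (intro E; apply Hnz; rewrite E; ring).
assert (HA : (0 < A)%R) by (apply Cmod_gt_0, Ha).
assert (Hs1 : Cmod s = 1%R).
{ assert (H := unitary_det_modulus a b c d Hu). rewrite <- Hs, Cmod_mult in H.
  pose proof (Cmod_ge_0 s). nra. }
assert (Haa : Cconj a = RtoC A * RtoC A / a).
{ transitivity (a * Cconj a / a); [field; exact Ha|].
  rewrite <- Cmod2_conj, <- RtoC_mult. replace (Cmod a ^ 2)%R with (A * A)%R by (unfold A; ring).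
  reflexivity. }
assert (Hd : d = s * s * (RtoC A * RtoC A) / a).
{ rewrite (unitary_det_conj a b c d Hu) at 1. rewrite <- Hs, Haa. field. exact Ha. }
destruct Hu as [Hac [Hbd _]].
repeat split.
- exact HA.
- assert (0 < Cmod c)%R by (apply Cmod_gt_0, Hc). unfold A. nra.
- exact Hs1.
- assert (Hmd : Cmod d = A).
  { rewrite Hd, Cmod_div, !Cmod_mult, Hs1, Cmod_R by exact Ha.
    fold A. rewrite Rabs_pos_eq by lra. field. lra. }
  rewrite Hmd in Hbd. lra.
- exact Hd.
- transitivity (b * c / b); [field; exact Hb|]. f_equal.
  transitivity (a * d - s * s); [rewrite Hs; ring|]. rewrite Hd. field. exact Ha.
Qed.

Lemma unit_inv (w : Complex.C) : Cmod w = 1%R -> / w = Cconj w.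
Proof.
intro Hw. assert (Hw0 : w <> 0) by (apply Cmod_gt_0; lra).
transitivity (/ w * (w * Cconj w)).
- rewrite <- Cmod2_conj, Hw. replace (1 ^ 2)%R with 1%R by ring. rewrite Cmult_1_r. reflexivity.
- field. exact Hw0.
Qed.

Lemma unit_sum (w : Complex.C) : Cmod w = 1%R -> w + / w = RtoC (2 * fst w).
Proof.
intro Hw. rewrite unit_inv by exact Hw.
destruct w as [x y]. unfold Cconj, Cplus, RtoC. cbn [fst snd]. f_equal; ring.
Qed.

Lemma xfun_unit (a w : Complex.C) :
  Cmod w = 1%R -> (0 < Cmod a)%R -> Cmod (xfun a w) = (Rabs (fst w) / Cmod a)%R.
Proof.
intros Hw Ha. unfold xfun. rewrite unit_sum by exact Hw.
rewrite <- RtoC_div by lra. rewrite Cmod_R, Rabs_div by lra.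
rewrite !Rabs_mult, (Rabs_pos_eq 2), (Rabs_pos_eq (Cmod a)) by lra. field. lra.
Qed.

Lemma exists_sign (x : R) : exists e : R, (e * e = 1)%R /\ (e * x = Rabs x)%R.
Proof.
destruct (Rle_or_lt 0 x) as [Hx|Hx].
- exists 1%R. rewrite Rabs_pos_eq by exact Hx. split; ring.
- exists (-1)%R. rewrite Rabs_left by exact Hx. split; ring.
Qed.

Lemma vscal_vscal (x y : Complex.C) (u : vec2) : vscal x (vscal y u) = vscal (x * y) u.
Proof. unfold vscal. cbn [fst snd]. f_equal; ring. Qed.

Lemma vnormsq_scal (r : Complex.C) (u : vec2) :
  vnormsq (vscal r u) = (Cmod r ^ 2 * vnormsq u)%R.
Proof. unfold vnormsq, vscal. cbn [fst snd]. rewrite !Cmod_mult. ring. Qed.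

Lemma energy_rsum (M : nat) (phi : nat -> vec2) :
  energy M phi = rsum (fun n => vnormsq (phi n)) M.
Proof. induction M as [|M IH]; simpl; [reflexivity|]. rewrite IH. reflexivity. Qed.

(* The coin in normal form ([unitary_normal_form]), a spectral parameter [w]
   on the unit circle, and a sign [e] with [e Re w = |Re w| = A Ch]. *)
Section Profile.
Variables (a b c d s w : Complex.C) (A e Ch : R).
Hypotheses (Ha : Cmod a = A) (HA : (0 < A)%R) (Hb : (Cmod b ^ 2 = 1 - A ^ 2)%R) (Hb0 : b <> 0)
  (Hs : Cmod s = 1%R) (Hw : Cmod w = 1%R) (He : (e * e = 1)%R) (HeC : (e * fst w = A * Ch)%R)
  (Hd : d = s * s * (RtoC A * RtoC A) / a) (Hc : c = s * s * (RtoC A * RtoC A - 1) / b).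

(* The phase gained by one step of back-substitution. *)
Definition rho : Complex.C := RtoC e * a / (RtoC A * s).

(* The vector at a site whose Chebyshev data are [sig0], [sig1]. *)
Definition profile (sig0 sig1 : R) : vec2 :=
  (RtoC e * b * RtoC A / (a * w) * RtoC sig0, RtoC sig1 - RtoC e * RtoC A / w * RtoC sig0).

(* The normalised solution at distance [k] from the right end. *)
Definition Wvec (k : nat) : vec2 := vscal (rho ^ k) (profile (cheb Ch k) (cheb Ch (S k))).

Let a0 : a <> 0. Proof. apply Cmod_gt_0. lra. Qed.
Let s0 : s <> 0. Proof. apply Cmod_gt_0. lra. Qed.
Let w0 : w <> 0. Proof. apply Cmod_gt_0. lra. Qed.
Let A0 : RtoC A <> 0. Proof. intro E. apply (f_equal fst) in E. simpl in E. lra. Qed.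
Let e1 : Rabs e = 1%R.
Proof. destruct (Rle_or_lt 0 e); [rewrite Rabs_pos_eq | rewrite Rabs_left]; nra. Qed.
Let d0 : d <> 0.
Proof.
apply Cmod_gt_0. rewrite Hd, Cmod_div, !Cmod_mult, Cmod_R, Hs, Ha by exact a0.
rewrite Rabs_pos_eq by lra. apply Rdiv_lt_0_compat; nra.
Qed.

(* One step of back-substitution advances the Chebyshev recursion by one and
   multiplies by the phase [rho]; here [2 A Ch = e (w + 1/w)] is used. *)
Lemma back_profile (sig0 sig1 : R) :
  back a b c d (s * w) (profile sig0 sig1)
  = vscal rho (profile sig1 (2 * Ch * sig1 - sig0)).
Proof.
assert (HCh : RtoC Ch = RtoC e * (w + / w) / (2 * RtoC A)).
{ rewrite unit_sum, <- RtoC_mult by exact Hw.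
  replace (e * (2 * fst w))%R with (2 * A * Ch)%R
    by (transitivity (2 * (e * fst w))%R; [rewrite HeC |]; ring).
  rewrite !RtoC_mult. field. exact A0. }
assert (Hee : RtoC e * RtoC e = 1) by (rewrite <- RtoC_mult, He; reflexivity).
unfold back, profile, vscal, rho. cbn [fst snd].
rewrite Hc, Hd, RtoC_minus, !RtoC_mult, HCh.
f_equal; field_simplify_eq; auto;
  replace (RtoC e ^ 2) with (RtoC e * RtoC e) by ring; rewrite Hee; ring.
Qed.

Lemma back_Wvec (k : nat) : back a b c d (s * w) (Wvec k) = Wvec (S k).
Proof.
unfold Wvec. rewrite back_scal, back_profile, vscal_vscal by (auto using Cmult_neq_0).
rewrite Cmult_comm. reflexivity.
Qed.

Lemma Cmod_rho : Cmod rho = 1%R.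
Proof.
unfold rho. rewrite Cmod_div, !Cmod_mult, !Cmod_R, Ha, Hs, e1, Rabs_pos_eq
  by (auto using Cmult_neq_0; lra).
field. lra.
Qed.

(* The moduli of the two components of a profile vector; the second uses
   [1/w = conj w] and [e Re w = A Ch]. *)
Lemma profile_fst_norm (sig0 sig1 : R) :
  (Cmod (fst (profile sig0 sig1)) ^ 2 = (1 - A ^ 2) * sig0 ^ 2)%R.
Proof.
unfold profile. cbn [fst].
rewrite !Cmod_mult, Cmod_div, !Cmod_mult, !Cmod_R, Ha, Hw by (apply Cmult_neq_0; auto).
rewrite e1, (Rabs_pos_eq A) by lra.
replace (sig0 ^ 2)%R with (Rabs sig0 ^ 2)%R by apply pow2_abs. rewrite <- Hb. field. lra.
Qed.

Lemma profile_snd_norm (sig0 sig1 : R) :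
  (Cmod (snd (profile sig0 sig1)) ^ 2
   = sig1 ^ 2 - 2 * A ^ 2 * Ch * sig0 * sig1 + A ^ 2 * sig0 ^ 2)%R.
Proof.
unfold profile. cbn [snd]. unfold Cdiv. rewrite unit_inv, Cmod2_comp by exact Hw.
assert (Hw2 := Cmod2_comp w). rewrite Hw in Hw2.
destruct w as [wr wi]. cbn [fst snd] in HeC, Hw2 |- *.
transitivity (sig1 ^ 2 - 2 * A * (e * wr) * sig0 * sig1
              + (e * e) * A ^ 2 * sig0 ^ 2 * (wr ^ 2 + wi ^ 2))%R; [simpl; ring|].
rewrite He, HeC, <- Hw2. ring.
Qed.

(* Since [|rho| = 1], the squared moduli of [Wvec k] are [tail] and [weight]. *)
Lemma Wvec_norms (k : nat) :
  (Cmod (snd (Wvec k)) ^ 2 = tail A Ch k)%R /\ vnormsq (Wvec k) = weight A Ch k.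
Proof.
unfold Wvec, vscal, vnormsq, weight, tail. cbn [fst snd].
rewrite !Cmod_mult, Cmod_pow, Cmod_rho, pow1, !Rmult_1_l.
rewrite profile_fst_norm, profile_snd_norm. split; ring.
Qed.

Variables (M : nat) (phi : nat -> vec2).
Hypotheses (Hsol : solves a b c d (s * w) M phi) (HM : (1 <= M)%nat).

Let z0 : s * w <> 0. Proof. apply Cmult_neq_0; auto. Qed.

Lemma solution_profile (k : nat) :
  (k < M)%nat -> phi (M - 1 - k)%nat = vscal (snd (phi (M - 1)%nat)) (Wvec k).
Proof.
induction k as [|k IH]; intro Hk.
- rewrite Nat.sub_0_r, (solves_right_end a b c d (s * w) M phi Hsol z0 HM) at 1.
  unfold Wvec, profile, vscal. cbn. f_equal; ring.
- rewrite (solves_back a b c d (s * w) M phi Hsol z0 d0) by lia.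
  replace (S (M - 1 - S k)) with (M - 1 - k)%nat by lia.
  rewrite IH, back_scal, back_Wvec by (auto || lia). reflexivity.
Qed.

Lemma energy_formula : energy M phi = (rsum (weight A Ch) M / tail A Ch (M - 1))%R.
Proof.
set (V := snd (phi (M - 1)%nat)).
assert (HE : energy M phi = (Cmod V ^ 2 * rsum (weight A Ch) M)%R).
{ rewrite energy_rsum, <- rsum_rev, <- rsum_scal. apply rsum_ext. intros k Hk.
  rewrite solution_profile, vnormsq_scal by exact Hk. f_equal. apply Wvec_norms. }
assert (HV : (Cmod V ^ 2 * tail A Ch (M - 1) = 1)%R).
{ assert (H0 := solves_left_end a b c d (s * w) M phi Hsol HM).
  replace 0%nat with (M - 1 - (M - 1))%nat in H0 by lia.
  rewrite solution_profile in H0 by lia. unfold vscal in H0. cbn [snd] in H0.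
  apply (f_equal (fun x => Cmod x ^ 2)%R) in H0.
  rewrite !Cmod_mult, Cmod_1, Hs, Hw in H0.
  destruct (Wvec_norms (M - 1)) as [Htail _]. fold V in H0. rewrite <- Htail.
  transitivity (1 ^ 2)%R; [rewrite <- H0 |]; ring. }
assert (Htail : tail A Ch (M - 1) <> 0%R) by (intro E; rewrite E in HV; lra).
rewrite HE. replace (Cmod V ^ 2)%R with (/ tail A Ch (M - 1))%R.
- unfold Rdiv. ring.
- rewrite <- (Rmult_1_l (/ _)), <- HV. field. exact Htail.
Qed.

End Profile.

Theorem mainTheorem10
  (a b c d sqrtDelta : Complex.C) (omega : nat -> Complex.C) (theta : nat -> R)
  (thetastar : R) (phi : nat -> nat -> vec2) :
  unitary2 a b c d ->
  (a * b * c * d <> RtoC 0)%C ->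
  (sqrtDelta * sqrtDelta = a * d - b * c)%C ->
  (forall M : nat, (1 <= M)%nat -> in_Bout a (omega M)) ->
  (forall M : nat, (1 <= M)%nat ->
     (0 < theta M)%R /\ cosh (theta M) = Cmod (xfun a (omega M))) ->
  (0 < thetastar)%R ->
  is_lim_seq (fun M => (INR M * theta M)%R) thetastar ->
  (forall M : nat, (1 <= M)%nat ->
     solves a b c d (sqrtDelta * omega M)%C M (phi M)) ->
  is_lim_seq (fun M => (energy M (phi M) / INR M)%R)
    (/ (sinh thetastar ^ 2) * (sinh (2 * thetastar) / (2 * thetastar) - 1))%R.
Proof.
intros Hu Hnz Hs HB Hth Hts Hlim Hsol.
destruct (unitary_normal_form a b c d sqrtDelta Hu Hnz Hs) as (HA & HA1 & Hs1 & Hb & Hd & Hc).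
assert (Hb0 : b <> RtoC 0) by (intro E; apply Hnz; rewrite E; ring).
apply is_lim_seq_ext_loc with (fun M =>
  rsum (weight (Cmod a) (cosh (theta M))) M / tail (Cmod a) (cosh (theta M)) (M - 1) / INR M)%R.
-
  exists 1%nat. intros M HM.
  destruct (HB M HM) as [Hw _]. destruct (Hth M HM) as [_ Hcosh].
  destruct (exists_sign (fst (omega M))) as (e & He & Hsign).
  assert (HeC : (e * fst (omega M) = Cmod a * cosh (theta M))%R).
  { rewrite Hcosh, xfun_unit, Hsign by assumption. field. lra. }
  rewrite (energy_formula a b c d sqrtDelta (omega M) (Cmod a) e (cosh (theta M)));
    auto.
-
  apply energy_ratio_limit; auto. intros n Hn. apply Hth, Hn.
Qed.
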